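(* Let $X$ be a nonempty set, $G\le S_X$, $\Lambda=(\lambda_x\in G:x\in X/G)$, and consider $(X,* )=\mathbf R(G,\Lambda)$. Then: (i) $(X,* )$ is well-defined if and only if $(G,\Lambda)$ is a rack folder, in which case $(X,* )$ is a rack satisfying $L_x=\lambda_x$ for every $x\in X/G$ and $\mathrm{LMlt}(X,* )=\langle\bigcup_{x\in X/G}\lambda_x^G\rangle\le G$; (ii) $(X,* )$ is a well-defined quandle if and only if $(G,\Lambda)$ is a quandle folder.
   Context: Permutations act on the right ($xf$ is the image of $x$ under $f$; $fg$ means $f$ first, then $g$); $g^f=f^{-1}gf$, $f^G=\{f^g:g\in G\}$. For $G\le S_X$, $xG$ is the orbit of $x$, $G_x$ its stabilizer, $X/G$ a fixed complete set of orbit representatives; $C_G(H)$ is the centralizer, $Z(H)$ the center. A left quasigroup is a groupoid $(X,* )$ whose left translations $L_x$ ($yL_x=x*y$) are bijections; a rack is a left quasigroup with $x*(y*z)=(x*y)*(x*z)$; a quandle is a rack with $x*x=x$; $\mathrm{LMlt}(X,* )=\langle L_x:x\in X\rangle$. A pair $(G,(\lambda_x:x\in X/G))$ is a rack folder (resp. quandle folder) if $\lambda_x\in C_G(G_x)$ (resp. $\lambda_x\in Z(G_x)$) for every $x\in X/G$. Given $G\le S_X$ and $\Lambda=(\lambda_x\in G:x\in X/G)$, $\mathbf R(G,\Lambda)=(X,* )$ is the attempted groupoid defined by setting $L_y=(\lambda_x)^{g_y}$ whenever $x\in X/G$, $y\in xG$ and $g_y$ is any element of $G$ with $xg_y=y$;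 it is well-defined if this does not depend on the choice of $g_y$. *)

From Stdlib Require Import ClassicalEpsilon.

Set Implicit Arguments.

Record perm (X : Type) := Perm {
  pfun : X -> X;
  pinv : X -> X;
  pinvK : forall x, pinv (pfun x) = x;
  pfunK : forall x, pfun (pinv x) = x }.
Arguments Perm {X}.
Arguments pfun {X}.
Arguments pinv {X}.

Section PermOps.
Variable X : Type.

(** Right action: [act x f] is xf, the image of x under f. *)
Definition act (x : X) (f : perm X) : X := pfun f x.

Definition pone : perm X :=
  @Perm X (fun x => x) (fun x => x) (fun x => eq_refl) (fun x => eq_refl).

(** fg means f first, then g. *)
Program Definition pmul (f g : perm X) : perm X :=
  @Perm X (fun x => pfun g (pfun f x)) (fun x => pinv f (pinv g x)) _ _.
Next Obligation. now rewrite pinvK, pinvK. Qed.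
Next Obligation. now rewrite pfunK, pfunK. Qed.

Definition pinvp (f : perm X) : perm X :=
  @Perm X (pinv f) (pfun f) (pfunK f) (pinvK f).

Definition conj (g f : perm X) : perm X := pmul (pmul (pinvp f) g) f.

Definition is_subgroup (G : perm X -> Prop) : Prop :=
  G pone /\ (forall f g, G f -> G g -> G (pmul f g)) /\
  (forall f, G f -> G (pinvp f)).

Definition gen (S : perm X -> Prop) (h : perm X) : Prop :=
  forall H, is_subgroup H -> (forall s, S s -> H s) -> H h.

Definition orbit (G : perm X -> Prop) (x y : X) : Prop :=
  exists g, G g /\ act x g = y.

Definition stab (G : perm X -> Prop) (x : X) (g : perm X) : Prop :=
  G g /\ act x g = x.

(** R is a complete set of orbit representatives (X/G) *)
Definition is_transversal (G : perm X -> Prop) (R : X -> Prop) : Prop :=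
  (forall x, exists r, R r /\ orbit G r x) /\
  (forall r s, R r -> R s -> orbit G r s -> r = s).

Definition centralizer (G H : perm X -> Prop) (c : perm X) : Prop :=
  G c /\ forall h, H h -> pmul c h = pmul h c.
Definition center (H : perm X -> Prop) (c : perm X) : Prop :=
  centralizer H H c.

(** Lambda = (lam r : r in R); values of lam outside R are irrelevant. *)
Definition rack_folder (G : perm X -> Prop) (R : X -> Prop) (lam : X -> perm X) :=
  forall r, R r -> centralizer G (stab G r) (lam r).
Definition quandle_folder (G : perm X -> Prop) (R : X -> Prop) (lam : X -> perm X) :=
  forall r, R r -> center (stab G r) (lam r).

(** R(G, Lambda) is well-defined: L_y = (lam x)^(g_y) does not depend on g_y *)
Definition R_well_defined (G : perm X -> Prop) (R : X -> Prop) (lam : X -> perm X) :=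
  forall r y g1 g2, R r -> G g1 -> G g2 -> act r g1 = y -> act r g2 = y ->
    conj (lam r) g1 = conj (lam r) g2.

(** The attempted left translation L_y = (lam x)^(g_y), for some chosen
    representative x of the orbit of y and some g_y in G with x g_y = y. *)
Definition RL (G : perm X -> Prop) (R : X -> Prop) (lam : X -> perm X) (y : X)
  : perm X :=
  let p := epsilon (inhabits (y, pone))
             (fun p : X * perm X => R (fst p) /\ G (snd p) /\ act (fst p) (snd p) = y) in
  conj (lam (fst p)) (snd p).

Definition Rop (G : perm X -> Prop) (R : X -> Prop) (lam : X -> perm X)
  (y z : X) : X := act z (RL G R lam y).

Definition bijective_fun (f : X -> X) : Prop :=
  exists g : X -> X, (forall x, g (f x) = x) /\ (forall x, f (g x) = x).
Definition is_left_quasigroup (op : X -> X -> X) : Prop :=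
  forall x, bijective_fun (op x).
Definition is_rack (op : X -> X -> X) : Prop :=
  is_left_quasigroup op /\
  forall x y z, op x (op y z) = op (op x y) (op x z).
Definition is_quandle (op : X -> X -> X) : Prop :=
  is_rack op /\ forall x, op x x = x.

Definition LMlt (op : X -> X -> X) : perm X -> Prop :=
  gen (fun h => exists x, pfun h = op x).

End PermOps.

From Stdlib Require Import ClassicalEpsilon FunctionalExtensionality ProofIrrelevance.

(* Every y is r g for a unique representative r and some g in G, and two such g
   differ by an element of the stabilizer G_r; so (lam r)^g is independent of g
   exactly when lam r centralizes G_r.  Once well defined, the translations are
   G-equivariant, L_{y f} = (L_y)^f, which for f = L_x is the self-distributive
   law; and r * r = r means that lam r fixes r, i.e. lam r lies in G_r, which
   turns the centralizer condition into the center condition. *)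

Set Implicit Arguments.

Section PermAlgebra.
Variable X : Type.
Implicit Types (x y : X) (c f g h : perm X).

Lemma perm_ext f g : (forall x, act x f = act x g) -> f = g.
Proof.
  intros H. assert (Hf : pfun f = pfun g) by (extensionality x; apply H).
  assert (Hi : pinv f = pinv g).
  { extensionality x. rewrite <- (pfunK g x) at 1. rewrite <- Hf. apply pinvK. }
  destruct f as [f fi a b], g as [g gi c d]; simpl in *. subst.
  rewrite (proof_irrelevance _ a c), (proof_irrelevance _ b d). reflexivity.
Qed.

Lemma act_pmul x f g : act x (pmul f g) = act (act x f) g.
Proof. reflexivity. Qed.

Lemma act_pinvpK x f : act (act x f) (pinvp f) = x.
Proof. apply pinvK. Qed.

Lemma act_pinvpKV x f : act (act x (pinvp f)) f = x.
Proof. apply pfunK. Qed.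

Lemma conjp1 c : conj c (pone X) = c.
Proof. apply perm_ext. reflexivity. Qed.

Lemma conjpM c f g : conj c (pmul f g) = conj (conj c f) g.
Proof. apply perm_ext. reflexivity. Qed.

Lemma act_conj x c f : act (act x f) (conj c f) = act (act x c) f.
Proof. unfold conj. now rewrite !act_pmul, act_pinvpK. Qed.

Lemma conj_eq_iff c g1 g2 :
  conj c g1 = conj c g2 <-> pmul c (pmul g1 (pinvp g2)) = pmul (pmul g1 (pinvp g2)) c.
Proof.
  split; intros E; apply perm_ext; intros x.
  - assert (Ex := f_equal (act (act x g1)) E).
    unfold conj in Ex. rewrite !act_pmul, act_pinvpK in Ex.
    rewrite !act_pmul, Ex. apply act_pinvpK.
  - assert (Ex := f_equal (act (act x (pinvp g1))) E).
    rewrite !act_pmul, act_pinvpKV in Ex.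
    unfold conj. rewrite !act_pmul, <- Ex. now rewrite act_pinvpKV.
Qed.

Lemma gen_mono (S1 S2 : perm X -> Prop) h :
  (forall k, S1 k -> S2 k) -> gen S1 h -> gen S2 h.
Proof. intros HS Hh H HH HS1. apply Hh; auto. Qed.

Section Subgroup.
Variable G : perm X -> Prop.
Hypothesis HG : is_subgroup G.

Lemma subgroup_conj c f : G c -> G f -> G (conj c f).
Proof. destruct HG as [_ [GM GI]]. intros Gc Gf. unfold conj. auto. Qed.

Lemma stab_pmul_pinvp r g1 g2 :
  G g1 -> G g2 -> act r g1 = act r g2 -> stab G r (pmul g1 (pinvp g2)).
Proof.
  destruct HG as [_ [GM GI]]. intros G1 G2 E. split; auto.
  now rewrite act_pmul, E, act_pinvpK.
Qed.

Lemma transversal_act_eq (R : X -> Prop) r s g1 g2 :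
  is_transversal G R -> R r -> R s -> G g1 -> G g2 ->
  act r g1 = act s g2 -> r = s.
Proof.
  destruct HG as [_ [GM GI]]. intros [_ HT] Rr Rs G1 G2 E.
  apply HT; auto. exists (pmul g1 (pinvp g2)). split; auto.
  now rewrite act_pmul, E, act_pinvpK.
Qed.

End Subgroup.
End PermAlgebra.

Section Folder.
Variables (X : Type) (G : perm X -> Prop) (R : X -> Prop) (lam : X -> perm X).
Hypothesis HG : is_subgroup G.
Hypothesis HT : is_transversal G R.
Hypothesis Hlam : forall r, R r -> G (lam r).

Lemma well_defined_iff_rack_folder : R_well_defined G R lam <-> rack_folder G R lam.
Proof.
  pose proof HG as [G1 _]. split.
  - intros HW r Rr. split; auto. intros h [Gh Hh].
    assert (E := HW r r h (pone X) Rr Gh G1 Hh eq_refl).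
    apply conj_eq_iff in E.
    replace (pmul h (pinvp (pone X))) with h in E by (apply perm_ext; reflexivity).
    exact E.
  - intros HF r y g1 g2 Rr G1g G2g E1 E2. apply conj_eq_iff.
    apply (proj2 (HF r Rr)). apply stab_pmul_pinvp; congruence.
Qed.

Lemma quandle_folder_iff :
  quandle_folder G R lam <->
  rack_folder G R lam /\ forall r, R r -> act r (lam r) = r.
Proof.
  split.
  - intros HQ. split; intros r Rr; destruct (HQ r Rr) as [[Gl Hfix] Hc].
    + split; auto.
    + exact Hfix.
  - intros [HF Hfix] r Rr. destruct (HF r Rr) as [Gl Hc]. repeat split; auto.
Qed.

Section WellDefined.
Hypothesis HW : R_well_defined G R lam.

Lemma RL_conj r g : R r -> G g -> RL G R lam (act r g) = conj (lam r) g.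
Proof.
  intros Rr Gg. unfold RL.
  match goal with |- context [epsilon ?i ?P] =>
    assert (HP : P (epsilon i P)) by (apply epsilon_spec; now exists (r, g)) end.
  destruct (epsilon _ _) as [s g']. simpl in *. destruct HP as [Rs [Gg' E]].
  assert (s = r) by exact (transversal_act_eq HG _ _ _ _ HT Rs Rr Gg' Gg E).
  subst s. exact (HW Rr Gg' Gg E eq_refl).
Qed.

Lemma RL_in_G y : G (RL G R lam y).
Proof.
  destruct (proj1 HT y) as [r [Rr [g [Gg <-]]]].
  rewrite RL_conj by auto. apply subgroup_conj; auto.
Qed.

Lemma RL_act y f : G f -> RL G R lam (act y f) = conj (RL G R lam y) f.
Proof.
  pose proof HG as [_ [GM _]]. intros Gf.
  destruct (proj1 HT y) as [r [Rr [g [Gg <-]]]].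
  now rewrite <- act_pmul, !RL_conj, conjpM by auto.
Qed.

Lemma Rop_repr r : R r -> Rop G R lam r = pfun (lam r).
Proof.
  pose proof HG as [G1 _]. intros Rr. extensionality z. unfold Rop.
  change r with (act r (pone X)) at 1. now rewrite RL_conj, conjp1.
Qed.

Lemma Rop_is_rack : is_rack (Rop G R lam).
Proof.
  split.
  - intros x. exists (pinv (RL G R lam x)).
    split; intros z; [apply pinvK | apply pfunK].
  - intros x y z. unfold Rop at 1 3 4 5.
    rewrite RL_act by apply RL_in_G. symmetry. apply act_conj.
Qed.

Lemma LMlt_generators k :
  (exists y, pfun k = Rop G R lam y) <->
  exists r g, R r /\ G g /\ k = conj (lam r) g.
Proof.
  split.
  - intros [y Hy]. destruct (proj1 HT y) as [r [Rr [g [Gg <-]]]].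
    exists r, g. repeat split; auto. rewrite <- RL_conj by auto.
    apply perm_ext. intros z. unfold act. now rewrite Hy.
  - intros [r [g [Rr [Gg ->]]]]. exists (act r g).
    extensionality z. unfold Rop. now rewrite RL_conj.
Qed.

Lemma LMlt_iff_gen_conj h :
  LMlt (Rop G R lam) h <->
  gen (fun k => exists r g, R r /\ G g /\ k = conj (lam r) g) h.
Proof. split; apply gen_mono; intros k; apply LMlt_generators. Qed.

Lemma LMlt_sub h : LMlt (Rop G R lam) h -> G h.
Proof.
  intros Hh. apply Hh; auto. intros k Hk.
  apply LMlt_generators in Hk as [r [g [Rr [Gg ->]]]]. apply subgroup_conj; auto.
Qed.

Lemma Rop_idempotent_iff :
  (forall x, Rop G R lam x x = x) <-> forall r, R r -> act r (lam r) = r.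
Proof.
  split.
  - intros Hid r Rr. assert (E := Hid r). now rewrite Rop_repr in E.
  - intros Hfix x. destruct (proj1 HT x) as [r [Rr [g [Gg <-]]]].
    unfold Rop. now rewrite RL_conj, act_conj, Hfix.
Qed.

End WellDefined.
End Folder.

Theorem proposition3p3 (X : Type) (G : perm X -> Prop) (R : X -> Prop)
  (lam : X -> perm X) :
  inhabited X ->
  is_subgroup G ->
  is_transversal G R ->
  (forall r, R r -> G (lam r)) ->
  (* (i) *)
  ((R_well_defined G R lam <-> rack_folder G R lam) /\
   (R_well_defined G R lam ->
      is_rack (Rop G R lam) /\
      (forall r, R r -> Rop G R lam r = pfun (lam r)) /\
      (forall h, LMlt (Rop G R lam) h <->
         gen (fun k => exists r g, R r /\ G g /\ k = conj (lam r) g) h) /\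
      (forall h, LMlt (Rop G R lam) h -> G h))) /\
  (* (ii) *)
  ((R_well_defined G R lam /\ is_quandle (Rop G R lam)) <-> quandle_folder G R lam).
Proof.
  intros _ HG HT Hlam.
  pose proof (well_defined_iff_rack_folder R lam HG Hlam) as WR.
  split; [split; [exact WR |] |].
  - intros HW. split; [| split; [| split]].
    + exact (Rop_is_rack HG HT Hlam HW).
    + exact (Rop_repr HG HT HW).
    + exact (LMlt_iff_gen_conj HG HT HW).
    + exact (LMlt_sub HG HT Hlam HW).
  - rewrite quandle_folder_iff. rewrite <- WR. split.
    + intros [HW [_ Hid]]. split; [exact HW |].
      now apply (Rop_idempotent_iff HG HT HW).
    + intros [HW Hfix]. split; [exact HW |]. split.
      * apply (Rop_is_rack HG HT Hlam HW).
      * now apply (Rop_idempotent_iff HG HT HW).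
Qed.
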